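(* Let $K>1$, $\mathcal{Y}=\{1,\dots,K\}$, and let $(X,Y,M)$ be distributed on $\mathcal{X}\times\mathcal{Y}\times\mathcal{Y}$. Define the asymmetric softmax $\tilde{\bm{\psi}}:\mathbb{R}^{K+1}\to\mathbb{R}^{K+1}$ by $\tilde{\psi}_y(\bm{u})=\exp(u_y)/\sum_{y'=1}^{K}\exp(u_{y'})$ for $1\le y\le K$ and $\tilde{\psi}_{K+1}(\bm{u})=\exp(u_{K+1})/\big(\sum_{y'=1}^{K+1}\exp(u_{y'})-\max_{y'\le K}\exp(u_{y'})\big)$, and the surrogate $$L_{\tilde{\psi}}(\bm{u},y,m)=-\log\tilde{\psi}_y(\bm{u})-[\![m\ne y]\!]\log\big(1-\tilde{\psi}_{K+1}(\bm{u})\big)-[\![m=y]\!]\log\tilde{\psi}_{K+1}(\bm{u}).$$ Let $R_{L_{\tilde{\psi}}}(\bm{g})=\mathbb{E}[L_{\tilde{\psi}}(\bm{g}(X),Y,M)]$ for measurable $\bm{g}:\mathcal{X}\to\mathbb{R}^{K+1}$. Then: (1) (consistency) for every $\bm{g}^*\in\mathop{\rm argmin}_{\bm{g}}R_{L_{\tilde{\psi}}}(\bm{g})$, the decision rule $\varphi\circ\bm{g}^*$ minimizes the 0-1-deferral risk $R^{\bot}_{01}(f)=\mathbb{E}[\ell^{\bot}_{01}(f(X),Y,M)]$ over all $f:\mathcal{X}\to\mathcal{Y}\cup\{\bot\}$; (2) the estimator $\hat{\bm{\eta}}^{\tilde{\psi}}=\tilde{\bm{\psi}}$ satisfies $\tilde{\bm{\psi}}(\bm{g}^*(\bm{x}))=[\bm{\eta}(\bm{x});\Pr(M=Y\mid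 X=\bm{x})]$ for all $\bm{x}\in\mathcal{X}$; (3) any other probability estimator for $L_{\tilde{\psi}}$ is necessarily bounded.
   Context: $\bm{\eta}(\bm{x})=(\Pr(Y=y\mid X=\bm{x}))_{y=1}^K$. The 0-1-deferral loss is $\ell^{\bot}_{01}(f(\bm{x}),y,m)=[\![f(\bm{x})\in\mathcal{Y},\ f(\bm{x})\ne y]\!]+[\![f(\bm{x})=\bot,\ m\ne y]\!]$, where $\bot$ denotes deferral to the expert whose prediction is $M$. The map $\varphi:\mathbb{R}^{K+1}\to\mathcal{Y}\cup\{\bot\}$ is $\varphi(\bm{u})=\bot$ if $u_{K+1}>\max_{y\le K}u_y$ and $\varphi(\bm{u})=\mathop{\rm argmax}_{y\le K}u_y$ otherwise. A probability estimator for a surrogate $L$ is a map $\hat{\bm{\eta}}:\mathbb{R}^{K+1}\to\mathbb{R}^{K+1}$ such that for every distribution and every minimizer $\bm{g}^*$ of the surrogate risk, $\hat{\bm{\eta}}(\bm{g}^*(\bm{x}))=[\bm{\eta}(\bm{x});\Pr(M=Y\mid X=\bm{x})]$. *)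

From HB Require Import structures.
From mathcomp Require Import all_boot all_order all_algebra.
From mathcomp Require Import all_classical all_reals all_analysis.
Set Implicit Arguments. Unset Strict Implicit. Unset Printing Implicit Defensive.
Import Order.TTheory GRing.Theory Num.Theory.
Import numFieldNormedType.Exports.
Local Open Scope classical_set_scope.
Local Open Scope ring_scope.

(* Labels Y = {1..K} are represented by 'I_K (0-based); score vectors in
   R^{K+1} by functions 'I_K.+1 -> R, whose last coordinate (ord_max) is the
   deferral coordinate (index K+1 in the paper). *)

Section Defs.
Variables (R : realType) (K : nat).

Definition lab (y : 'I_K) : 'I_K.+1 := widen_ord (leqnSn K) y.

Definition asoftmax (u : 'I_K.+1 -> R) (i : 'I_K.+1) : R :=
  if (i < K)%N then
    expR (u i) / (\sum_(j < K.+1 | (j < K)%N) expR (u j))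
  else
    expR (u i) / (\sum_(j < K.+1) expR (u j)
                  - \big[Num.max/0]_(j < K.+1 | (j < K)%N) expR (u j)).

Definition Lpsi (u : 'I_K.+1 -> R) (y m : 'I_K) : R :=
  - ln (asoftmax u (lab y))
  - (if m != y then ln (1 - asoftmax u ord_max) else 0)
  - (if m == y then ln (asoftmax u ord_max) else 0).

(* decision map phi : R^{K+1} -> Y u {bot}; None stands for bot.
   argmax ties are broken by [pick]. *)
Definition phi (u : 'I_K.+1 -> R) : option 'I_K :=
  if [forall y : 'I_K, u (lab y) < u ord_max] then None
  else [pick y : 'I_K | [forall y' : 'I_K, u (lab y') <= u (lab y)]].

Definition l01 (d : option 'I_K) (y m : 'I_K) : R :=
  match d with
  | Some y' => (y' != y)%:R
  | None => (m != y)%:R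
  end.

(* [eta(x); Pr(M = Y | X = x)] computed from the conditional pmf q(y,m) *)
Definition target (q : 'I_K -> 'I_K -> R) (i : 'I_K.+1) : R :=
  match unlift ord_max i with
  | Some y => \sum_(m < K) q y m
  | None => \sum_(y < K) q y y
  end.

Section Dist.
Context (d : measure_display) (T : measurableType d).

(* The joint law of (X, Y, M) on T x Y x Y is given by the marginal P of X
   and a (measurable) conditional pmf p x y m = Pr(Y = y, M = m | X = x). *)
Definition cond_pmf (p : T -> 'I_K -> 'I_K -> R) : Prop :=
  [/\ forall x y m, 0 <= p x y m,
      forall x, \sum_(y < K) \sum_(m < K) p x y m = 1
    & forall y m, measurable_fun setT (fun x => p x y m)].

Definition Rpsi (P : probability T R) (p : T -> 'I_K -> 'I_K -> R)
    (g : 'I_K.+1 -> T -> R) : \bar R :=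
  (\int[P]_x (\sum_(y < K) \sum_(m < K) p x y m * Lpsi (fun i => g i x) y m)%:E)%E.

Definition meas_score (g : 'I_K.+1 -> T -> R) : Prop :=
  forall i, measurable_fun setT (g i).

Definition risk_minimizer (P : probability T R) (p : T -> 'I_K -> 'I_K -> R)
    (g : 'I_K.+1 -> T -> R) : Prop :=
  meas_score g /\
  forall g', meas_score g' -> (Rpsi P p g <= Rpsi P p g')%E.

Definition meas_dec (f : T -> option 'I_K) : Prop :=
  forall o, measurable (f @^-1` [set o]).

Definition R01 (P : probability T R) (p : T -> 'I_K -> 'I_K -> R)
    (f : T -> option 'I_K) : \bar R :=
  (\int[P]_x (\sum_(y < K) \sum_(m < K) p x y m * l01 (f x) y m)%:E)%E.

End Dist.

Definition prob_estimator (h : ('I_K.+1 -> R) -> ('I_K.+1 -> R)) : Prop :=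
  forall (d : measure_display) (T : measurableType d) (P : probability T R)
         (p : T -> 'I_K -> 'I_K -> R) (g : 'I_K.+1 -> T -> R),
    cond_pmf p -> risk_minimizer P p g ->
    {ae P, forall x, h (fun i => g i x) = target (p x)}.

End Defs.

From HB Require Import structures.
From mathcomp Require Import all_boot all_order all_algebra.
From mathcomp Require Import all_classical all_reals all_analysis.
From mathcomp Require Import ring lra measurable_realfun.
Set Implicit Arguments. Unset Strict Implicit. Unset Printing Implicit Defensive.
Import Order.TTheory GRing.Theory Num.Theory.
Import numFieldNormedType.Exports.
Local Open Scope classical_set_scope.
Local Open Scope ring_scope.

(* The conditional surrogate risk at [x] is a sum of two cross-entropies: of
   the label distribution [eta(x)] against the label coordinates of psi~(u),
   and of the law of [M = Y] against its last coordinate. By Gibbs' inequality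
   it is minimal where psi~(u) equals the target [eta(x); Pr(M = Y | X = x)],
   and moving psi~(u) halfway towards the target strictly lowers it unless they
   agree; integrating, a risk minimiser is calibrated almost everywhere.
   Calibration gives consistency, since psi~ is increasing in the label scores
   and its last coordinate beats every label coordinate exactly when the last
   score beats every label score. Finally every value of psi~ is the target of
   some conditional law, so any probability estimator coincides with psi~ and
   is bounded by 1. *)

Lemma ln_le_subr1 (R : realType) (x : R) : 0 < x -> ln x <= x - 1.
Proof.
move=> x_gt0; have := @le_ln1Dx R (x - 1).
by rewrite subrKC; apply; lra.
Qed.

Section LogLikelihood.
Variables (R : realType) (I : finType).

Definition loglik (w a : I -> R) : R := \sum_i w i * ln (a i).

Lemma gibbs_term (w a : R) : 0 <= w -> 0 < a -> w * ln a - w * ln w <= a - w.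
Proof.
rewrite le0r => /orP[/eqP-> | w_gt0] a_gt0; first by rewrite !mul0r subrr subr0 ltW.
have := ln_le_subr1 (divr_gt0 a_gt0 w_gt0).
rewrite ln_div ?posrE // -mulrBr => le_ln.
have -> : a - w = w * (a / w - 1) by field; rewrite gt_eqF.
by rewrite ler_pM2l.
Qed.

Lemma gibbs (w a : I -> R) : (forall i, 0 <= w i) -> (forall i, 0 < a i) ->
  \sum_i a i <= \sum_i w i -> loglik w a <= loglik w w.
Proof.
move=> w_ge0 a_gt0 le_sum; rewrite -subr_le0 /loglik -sumrB.
apply: le_trans (_ : \sum_i (a i - w i) <= 0); last by rewrite sumrB subr_le0.
by apply: ler_sum => i _; apply: gibbs_term.
Qed.

Lemma midpoint_term_leif (w a : R) : 0 <= w -> 0 < a ->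
  w * ln a + (w - a) / 2 <= w * ln ((a + w) / 2) ?= iff (w == a).
Proof.
move=> w_ge0 a_gt0; set m := (a + w) / 2; have m_gt0 : 0 < m by rewrite /m; lra.
set gap := (w - a) ^+ 2 / (2 * (w + a)).
have gap_ge0 : 0 <= gap by apply: divr_ge0; [exact: sqr_ge0 | lra].
have gap_le : w * ln a + (w - a) / 2 + gap <= w * ln m.
  have := ln_le_subr1 (divr_gt0 a_gt0 m_gt0); rewrite ln_div ?posrE // => le_ln.
  have : w * ln a - w * ln m <= w * (a / m - 1) by rewrite -mulrBr ler_wpM2l.
  have -> : w * (a / m - 1) = - ((w - a) / 2 + gap).
    by rewrite /m /gap; field; apply: lt0r_neq0; lra.
  lra.
split; first lra.
apply/eqP/eqP => [eq_ln | eq_wa]; last first.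
  by rewrite /m eq_wa (_ : (a + a) / 2 = a) ?subrr ?mul0r ?addr0 //; field.
have /eqP : gap = 0 by lra.
by rewrite mulf_eq0 invr_eq0 sqrf_eq0 subr_eq0 => /orP[/eqP // | /eqP]; lra.
Qed.

Lemma loglik_midpoint (w a : I -> R) : (forall i, 0 <= w i) -> (forall i, 0 < a i) ->
  \sum_i w i = \sum_i a i ->
  loglik w a <= loglik w (fun i => (a i + w i) / 2) ?= iff [forall i, w i == a i].
Proof.
move=> w_ge0 a_gt0 eq_sum.
have -> : loglik w a = \sum_i (w i * ln (a i) + (w i - a i) / 2).
  by rewrite big_split /= -mulr_suml sumrB eq_sum subrr mul0r addr0.
by apply: leif_sum => i _; exact: midpoint_term_leif.
Qed.

End LogLikelihood.

Section Labels.
Variable K : nat.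

Lemma lab_lift (y : 'I_K) : lab y = lift ord_max y.
Proof. by apply: val_inj; rewrite /= /bump leqNgt ltn_ord. Qed.

Variant lab_spec : 'I_K.+1 -> Type :=
  | LabMax : lab_spec ord_max
  | Lab y : lab_spec (lab y).

Lemma labP i : lab_spec i.
Proof. by case: (unliftP ord_max i) => [y ->|->]; [rewrite -lab_lift|]; constructor. Qed.

Lemma lab_eq_max (y : 'I_K) : (lab y == ord_max) = false.
Proof. by rewrite lab_lift eq_sym (negbTE (neq_lift _ _)). Qed.

Lemma target_lab (R : realType) (q : 'I_K -> 'I_K -> R) y :
  target q (lab y) = \sum_(m < K) q y m.
Proof. by rewrite /target lab_lift liftK. Qed.

Lemma target_max (R : realType) (q : 'I_K -> 'I_K -> R) :
  target q ord_max = \sum_(y < K) q y y.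
Proof. by rewrite /target unlift_none. Qed.

End Labels.

Section Softmax.
Variables (R : realType) (K : nat).
Implicit Types (u : 'I_K.+1 -> R) (y : 'I_K).

Definition expsum u : R := \sum_(y < K) expR (u (lab y)).
Definition expmax u : R := \big[Num.max/0]_(y < K) expR (u (lab y)).

Lemma asoftmax_lab u y : asoftmax u (lab y) = expR (u (lab y)) / expsum u.
Proof. by rewrite /asoftmax /= ltn_ord big_ord_narrow. Qed.

Lemma asoftmax_max u :
  asoftmax u ord_max = expR (u ord_max) / (expsum u + expR (u ord_max) - expmax u).
Proof. by rewrite /asoftmax /= ltnn big_ord_recr /= !big_ord_narrow. Qed.

Lemma le_expmax u y : expR (u (lab y)) <= expmax u.
Proof. exact: le_bigmax. Qed.

Lemma expmax_attained u : (0 < K)%N -> exists y, expmax u = expR (u (lab y)).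
Proof.
move=> K_gt0; exists [arg max_(y > Ordinal K_gt0) expR (u (lab y))]%O.
by apply: bigmax_eq_arg => // y _; rewrite ltW ?expR_gt0.
Qed.

Lemma expsum_gt0 u : (0 < K)%N -> 0 < expsum u.
Proof.
move=> K_gt0; rewrite /expsum (bigD1 (Ordinal K_gt0)) //=.
by rewrite ltr_pwDl ?expR_gt0 // sumr_ge0 // => y _; rewrite ltW ?expR_gt0.
Qed.

Lemma expmax_lt_expsum u : (1 < K)%N -> expmax u < expsum u.
Proof.
move=> K_gt1; have K_gt0 := ltnW K_gt1.
have [y0 ->] := expmax_attained u K_gt0.
have [y1 y10] : exists y1 : 'I_K, y1 != y0.
  have [->|ne] := eqVneq y0 (Ordinal K_gt0).
    by exists (Ordinal K_gt1); rewrite -(inj_eq val_inj).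
  by exists (Ordinal K_gt0); rewrite eq_sym.
rewrite /expsum (bigD1 y0) //= ltrDl (bigD1 y1) //=.
by rewrite ltr_pwDl ?expR_gt0 // sumr_ge0 // => y _; rewrite ltW ?expR_gt0.
Qed.

Lemma asoftmax_lab_gt0 u y : 0 < asoftmax u (lab y).
Proof.
by rewrite asoftmax_lab divr_gt0 ?expR_gt0 ?expsum_gt0 // (leq_ltn_trans _ (ltn_ord y)).
Qed.

Lemma sum_asoftmax_lab u : (0 < K)%N -> \sum_(y < K) asoftmax u (lab y) = 1.
Proof.
move=> K_gt0; under eq_bigr do rewrite asoftmax_lab.
by rewrite -mulr_suml divff // lt0r_neq0 ?expsum_gt0.
Qed.

Lemma asoftmax_max_itv u : (1 < K)%N -> 0 < asoftmax u ord_max < 1.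
Proof.
move=> K_gt1; have := expmax_lt_expsum u K_gt1; have := expR_gt0 (u ord_max).
rewrite asoftmax_max => e_gt0 lt_ms.
have den_gt0 : 0 < expsum u + expR (u ord_max) - expmax u by lra.
by rewrite divr_gt0 //= ltr_pdivrMr // mul1r; lra.
Qed.

Lemma asoftmax_gt0 u i : (1 < K)%N -> 0 < asoftmax u i.
Proof.
move=> K_gt1; case: (labP i) => [|y]; last exact: asoftmax_lab_gt0.
by have /andP[] := asoftmax_max_itv u K_gt1.
Qed.

Lemma asoftmax_lab_le1 u y : asoftmax u (lab y) <= 1.
Proof.
have K_gt0 : (0 < K)%N by rewrite (leq_ltn_trans _ (ltn_ord y)).
rewrite -(sum_asoftmax_lab u K_gt0) (bigD1 y) //= lerDl.
by rewrite sumr_ge0 // => y' _; rewrite ltW ?asoftmax_lab_gt0.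
Qed.

Lemma norm_asoftmax_le1 u i : (1 < K)%N -> `|asoftmax u i| <= 1.
Proof.
move=> K_gt1; case: (labP i) => [|y].
  by have /andP[lt0 lt1] := asoftmax_max_itv u K_gt1; rewrite gtr0_norm // ltW.
by rewrite gtr0_norm ?asoftmax_lab_le1 ?asoftmax_lab_gt0.
Qed.

Lemma Lpsi_ge0 u y m : (1 < K)%N -> 0 <= Lpsi u y m.
Proof.
move=> K_gt1; have /andP[lt0 lt1] := asoftmax_max_itv u K_gt1.
have ln_lab := ln_le0 (asoftmax_lab_le1 u y).
have ln_max : ln (asoftmax u ord_max) <= 0 by rewrite ln_le0 // ltW.
have ln_max' : ln (1 - asoftmax u ord_max) <= 0 by rewrite ln_le0 // lerBlDr lerDl ltW.
by rewrite /Lpsi; case: (m == y) => /=; lra.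
Qed.

Definition asoftmax_inv (t : 'I_K.+1 -> R) (i : 'I_K.+1) : R :=
  if i == ord_max then
    ln (t ord_max * (1 - \big[Num.max/0]_(y < K) t (lab y)) / (1 - t ord_max))
  else ln (t i).

Lemma asoftmax_invK (t : 'I_K.+1 -> R) : (1 < K)%N ->
  (forall i, 0 < t i) -> \sum_(y < K) t (lab y) = 1 -> t ord_max < 1 ->
  asoftmax (asoftmax_inv t) = t.
Proof.
move=> K_gt1 t_gt0 sum_t1 t_lt1; set M := \big[Num.max/0]_(y < K) t (lab y).
have inv_lab y : asoftmax_inv t (lab y) = ln (t (lab y)).
  by rewrite /asoftmax_inv lab_eq_max.
have sum1 : expsum (asoftmax_inv t) = 1.
  by rewrite -sum_t1; apply: eq_bigr => y _; rewrite inv_lab lnK ?posrE.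
have max_eq : expmax (asoftmax_inv t) = M.
  by apply: eq_bigr => y _; rewrite inv_lab lnK ?posrE.
have M_lt1 : M < 1 by rewrite -sum1 -max_eq expmax_lt_expsum.
apply/funext => i; case: (labP i) => [|y]; last first.
  by rewrite asoftmax_lab sum1 divr1 inv_lab lnK ?posrE.
have t_max_gt0 := t_gt0 ord_max.
have [M_ne1 t_ne1] : 1 - M != 0 /\ 1 - t ord_max != 0 by rewrite !lt0r_neq0 ?subr_gt0.
rewrite asoftmax_max sum1 max_eq /asoftmax_inv eqxx -/M lnK ?posrE; last first.
  by rewrite divr_gt0 ?mulr_gt0 // subr_gt0.
have -> : 1 + t ord_max * (1 - M) / (1 - t ord_max) - M = (1 - M) / (1 - t ord_max).
  by field.
by field; rewrite M_ne1 t_ne1.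
Qed.

Variant phi_spec u : option 'I_K -> Prop :=
  | PhiDefer of (forall y, u (lab y) < u ord_max) : phi_spec u None
  | PhiLabel y of (forall y', u (lab y') <= u (lab y)) & u ord_max <= u (lab y) :
      phi_spec u (Some y).

Lemma phiP u : (0 < K)%N -> phi_spec u (phi u).
Proof.
move=> K_gt0; rewrite /phi; case: ifPn => [/forallP | ]; first by constructor.
rewrite negb_forall => /existsP[y0]; rewrite -leNgt => le_max.
case: pickP => [y /forallP y_max | no_max].
  by constructor => //; apply: le_trans le_max (y_max y0).
have [y y_max] := expmax_attained u K_gt0.
move: (no_max y) => /negP[]; apply/forallP => y'.
by rewrite -ler_expR -y_max le_expmax.
Qed.

Definition dec_index (d : option 'I_K) : 'I_K.+1 := oapp (@lab K) ord_max d.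

(* [expmax u / expsum u] is the largest label coordinate. *)
Lemma asoftmax_max_sub u : (1 < K)%N -> exists2 c : R, 0 < c &
  asoftmax u ord_max - expmax u / expsum u = (expR (u ord_max) - expmax u) * c.
Proof.
move=> K_gt1; have S_gt0 := expsum_gt0 u (ltnW K_gt1).
have lt_ms := expmax_lt_expsum u K_gt1; have e_gt0 := expR_gt0 (u ord_max).
have den_gt0 : 0 < expsum u + expR (u ord_max) - expmax u by lra.
exists ((expsum u - expmax u) / (expsum u * (expsum u + expR (u ord_max) - expmax u))).
  by rewrite divr_gt0 ?mulr_gt0 // subr_gt0.
by rewrite asoftmax_max; field; rewrite !lt0r_neq0.
Qed.

Lemma asoftmax_phi_max u d : (1 < K)%N ->
  asoftmax u (dec_index d) <= asoftmax u (dec_index (phi u)).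
Proof.
move=> K_gt1; have S_gt0 := expsum_gt0 u (ltnW K_gt1).
have [c c_gt0 max_sub] := asoftmax_max_sub u K_gt1.
have lab_le y : asoftmax u (lab y) <= expmax u / expsum u.
  by rewrite asoftmax_lab ler_pM2r ?invr_gt0 ?le_expmax.
case: (phiP u (ltnW K_gt1)) => [lt_max | y y_max max_le].
  have [y0 M_eq] := expmax_attained u (ltnW K_gt1).
  have : 0 <= asoftmax u ord_max - expmax u / expsum u.
    by rewrite max_sub M_eq mulr_ge0 ?(ltW c_gt0) // subr_ge0 ler_expR ltW.
  by rewrite subr_ge0; case: d => [y /=|//]; apply: le_trans.
have M_eq : expmax u = expR (u (lab y)).
  by apply/eqP; rewrite eq_le le_expmax bigmax_le // => y' _; rewrite ?ler_expR ?expR_ge0.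
case: d => [y' /=|/=].
  by rewrite !asoftmax_lab ler_pM2r ?invr_gt0 // ler_expR.
have : asoftmax u ord_max - expmax u / expsum u <= 0.
  by rewrite max_sub mulr_le0_ge0 ?(ltW c_gt0) // subr_le0 M_eq ler_expR.
by rewrite subr_le0 asoftmax_lab M_eq.
Qed.

End Softmax.

Definition bool_dist (R : realType) (c : R) (b : bool) : R := if b then c else 1 - c.

Lemma sum_bool_dist (R : realType) (c : R) : \sum_b bool_dist c b = 1.
Proof. by rewrite big_bool /= subrKC. Qed.

Section ConditionalRisk.
Variables (R : realType) (K : nat) (q : 'I_K -> 'I_K -> R).
Hypotheses (q_ge0 : forall y m, 0 <= q y m)
           (q_sum1 : \sum_(y < K) \sum_(m < K) q y m = 1).

Lemma target_ge0 i : 0 <= target q i.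
Proof. by case: (labP i) => [|y]; rewrite ?target_max ?target_lab sumr_ge0. Qed.

Lemma sum_target_lab : \sum_(y < K) target q (lab y) = 1.
Proof. by under eq_bigr do rewrite target_lab. Qed.

Lemma target_max_le1 : target q ord_max <= 1.
Proof.
rewrite target_max -q_sum1; apply: ler_sum => y _.
by rewrite (bigD1 y) //= lerDl sumr_ge0.
Qed.

Lemma bool_dist_target_ge0 b : 0 <= bool_dist (target q ord_max) b.
Proof. by case: b; rewrite /= ?subr_ge0 ?target_ge0 ?target_max_le1. Qed.

Definition cond_risk01 (d : option 'I_K) : R :=
  \sum_(y < K) \sum_(m < K) q y m * l01 R d y m.

Lemma cond_risk01_ge0 d : 0 <= cond_risk01 d.
Proof.
rewrite sumr_ge0 // => y _; rewrite sumr_ge0 // => m _.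
by rewrite mulr_ge0 //; case: d => [?|] /=; exact: ler0n.
Qed.

Lemma cond_risk01_target d : cond_risk01 d = 1 - target q (dec_index d).
Proof.
rewrite /cond_risk01 -q_sum1; case: d => [y'|] /=.
  rewrite target_lab (bigD1 y') //= eqxx big1 ?add0r => [|m _]; last by rewrite mulr0.
  rewrite [in RHS](bigD1 y') //= addrC addrK.
  by apply: eq_bigr => y ne_y; apply: eq_bigr => m _; rewrite eq_sym ne_y mulr1.
rewrite target_max -sumrB; apply: eq_bigr => y _.
rewrite (bigD1 y) //= eqxx mulr0 add0r [in RHS](bigD1 y) //= addrC addrK.
by apply: eq_bigr => m ne_m; rewrite ne_m mulr1.
Qed.

Lemma phi_bayes u d : (1 < K)%N -> asoftmax u = target q ->
  cond_risk01 (phi u) <= cond_risk01 d.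
Proof.
move=> K_gt1 eq_t.
by rewrite !cond_risk01_target lerD2l lerN2 -eq_t asoftmax_phi_max.
Qed.

Definition cond_risk (u : 'I_K.+1 -> R) : R :=
  \sum_(y < K) \sum_(m < K) q y m * Lpsi u y m.

Lemma cond_riskE u : cond_risk u =
  - (loglik (fun y => target q (lab y)) (fun y => asoftmax u (lab y))
     + loglik (bool_dist (target q ord_max)) (bool_dist (asoftmax u ord_max))).
Proof.
set A := ln (1 - asoftmax u ord_max); set B := ln (asoftmax u ord_max).
have Lpsi_split y m : Lpsi u y m = - ln (asoftmax u (lab y)) - A + (m == y)%:R * (A - B).
  by rewrite /Lpsi -/A -/B; case: (m == y) => /=; ring.
have diag y X : \sum_(m < K) q y m * ((m == y)%:R * X) = q y y * X.
  rewrite (bigD1 y) //= eqxx mul1r big1 ?addr0 // => m /negbTE->.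
  by rewrite mul0r mulr0.
rewrite /cond_risk; under eq_bigr do under eq_bigr do rewrite Lpsi_split mulrDr.
under eq_bigr do rewrite big_split /= diag -mulr_suml -target_lab.
rewrite big_split /= -mulr_suml -target_max /loglik big_bool /=.
under eq_bigr do rewrite mulrBr mulrN.
rewrite sumrB sumrN -mulr_suml sum_target_lab -/A -/B; ring.
Qed.

Lemma cond_risk_min u v : (1 < K)%N -> asoftmax u = target q ->
  cond_risk u <= cond_risk v.
Proof.
move=> K_gt1 eq_t; have /andP[v_gt0 v_lt1] := asoftmax_max_itv v K_gt1.
rewrite !cond_riskE lerN2 eq_t; apply: lerD; apply: gibbs.
- by move=> y; exact: target_ge0.
- by move=> y; exact: asoftmax_lab_gt0.
- by rewrite sum_asoftmax_lab ?sum_target_lab // ltnW.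
- exact: bool_dist_target_ge0.
- by case; rewrite /= ?subr_gt0.
- by rewrite !sum_bool_dist.
Qed.

Lemma cond_risk_midpoint u u' : (1 < K)%N ->
  (forall i, asoftmax u' i = (asoftmax u i + target q i) / 2) ->
  cond_risk u' <= cond_risk u /\ (cond_risk u' = cond_risk u -> asoftmax u = target q).
Proof.
move=> K_gt1 mid; have /andP[u_gt0 u_lt1] := asoftmax_max_itv u K_gt1.
have lab_leif := loglik_midpoint (fun y => target_ge0 (lab y)) (asoftmax_lab_gt0 u)
  (etrans sum_target_lab (esym (sum_asoftmax_lab u (ltnW K_gt1)))).
have u_dist_gt0 b : 0 < bool_dist (asoftmax u ord_max) b by case: b; rewrite /= ?subr_gt0.
have bool_leif := loglik_midpoint bool_dist_target_ge0 u_dist_gt0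
  (etrans (sum_bool_dist _) (esym (sum_bool_dist _))).
have mid_lab : (fun y => (asoftmax u (lab y) + target q (lab y)) / 2) =
               (fun y => asoftmax u' (lab y)) by apply/funext => y; rewrite mid.
have mid_bool : (fun b => (bool_dist (asoftmax u ord_max) b +
                            bool_dist (target q ord_max) b) / 2) =
                bool_dist (asoftmax u' ord_max).
  by apply/funext => -[]; rewrite /= mid //; field.
rewrite mid_lab in lab_leif; rewrite mid_bool in bool_leif.
have [le_risk eq_risk] := leifD lab_leif bool_leif.
rewrite !cond_riskE lerN2; split => // /eqP.
rewrite eqr_opp eq_sym eq_risk => /andP[/forallP lab_eq /forallP bool_eq].
apply/funext => i; case: (labP i) => [|y]; last exact/esym/eqP/lab_eq.
exact/esym/eqP/(bool_eq true).
Qed.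

Lemma pmf_le1 y m : q y m <= 1.
Proof.
rewrite -q_sum1 (bigD1 y) //= (bigD1 m) //= -addrA lerDl.
by rewrite addr_ge0 ?sumr_ge0 // => y' _; rewrite sumr_ge0.
Qed.

Lemma cond_risk_ge0 u : (1 < K)%N -> 0 <= cond_risk u.
Proof.
move=> K_gt1; rewrite sumr_ge0 // => y _.
by rewrite sumr_ge0 // => m _; rewrite mulr_ge0 ?Lpsi_ge0.
Qed.

Lemma cond_risk_le_Lpsi u : (1 < K)%N ->
  cond_risk u <= \sum_(y < K) \sum_(m < K) Lpsi u y m.
Proof.
move=> K_gt1; apply: ler_sum => y _; apply: ler_sum => m _.
by rewrite ler_piMl ?Lpsi_ge0 ?pmf_le1.
Qed.

End ConditionalRisk.

Lemma target_asoftmax (R : realType) (K : nat) (u : 'I_K.+1 -> R) : (1 < K)%N ->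
  exists q : 'I_K -> 'I_K -> R,
    [/\ forall y m, 0 <= q y m, \sum_(y < K) \sum_(m < K) q y m = 1
       & target q = asoftmax u].
Proof.
move=> K_gt1; have K_gt0 := ltnW K_gt1.
have [other other_neq] : exists other : 'I_K -> 'I_K, forall y, other y != y.
  exists (fun y => if y == Ordinal K_gt0 then Ordinal K_gt1 else Ordinal K_gt0) => y /=.
  by have [->|ne] := eqVneq y (Ordinal K_gt0); rewrite 1?eq_sym // -(inj_eq val_inj).
set c := asoftmax u ord_max; have /andP[c_gt0 c_lt1] := asoftmax_max_itv u K_gt1.
(* given the label [y], the expert is right with probability [c] and otherwise
   answers [other y] *)
pose q y m : R := asoftmax u (lab y) *
  (if m == y then c else if m == other y then 1 - c else 0).
have q_row y : \sum_(m < K) q y m = asoftmax u (lab y).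
  rewrite -mulr_sumr (bigD1 y) //= eqxx (bigD1 (other y)) //= (negbTE (other_neq y)) eqxx.
  by rewrite big1 ?addr0 ?subrKC ?mulr1 // => m /andP[/negbTE-> /negbTE->].
exists q; split.
- move=> y m; apply: mulr_ge0; first exact/ltW/asoftmax_lab_gt0.
  by case: ifP => _; [exact: ltW | case: ifP => _; rewrite // subr_ge0 ltW].
- by under eq_bigr do rewrite q_row; rewrite sum_asoftmax_lab.
apply/funext => i; case: (labP i) => [|y]; last by rewrite target_lab q_row.
rewrite target_max; under eq_bigr do rewrite /q eqxx.
by rewrite -mulr_suml sum_asoftmax_lab // mul1r.
Qed.

Section Measurability.
Context (R : realType) (d : measure_display) (T : measurableType d).
Implicit Types f : T -> R.

Lemma measurable_funV_pos f : measurable_fun setT f -> (forall x, 0 < f x) ->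
  measurable_fun setT (fun x => (f x)^-1).
Proof.
move=> mf f_gt0; apply: (eq_measurable_fun (fun x => expR (- ln (f x)))).
  by move=> x _; rewrite expRN lnK ?posrE.
apply: measurableT_comp; first exact: measurable_expR.
apply: measurable_funN; apply: measurableT_comp mf; exact: measurable_ln.
Qed.

Lemma measurable_bigmax (I : Type) (r : seq I) (P : pred I) (F : I -> T -> R) :
  (forall i, measurable_fun setT (F i)) ->
  measurable_fun setT (fun x => \big[Num.max/0]_(i <- r | P i) F i x).
Proof.
move=> mF; elim: r => [|i r IH].
  by under eq_fun do rewrite big_nil; exact: measurable_cst.
under eq_fun do rewrite big_cons.
by case: (P i) => //; exact: measurable_maxr.
Qed.

Lemma measurable_fun_dec (C : finType) (f : T -> C) (G : C -> T -> R) :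
  (forall c, measurable (f @^-1` [set c])) -> (forall c, measurable_fun setT (G c)) ->
  measurable_fun setT (fun x => G (f x) x).
Proof.
move=> mf mG.
apply: (eq_measurable_fun (fun x => \sum_c \1_(f @^-1` [set c]) x * G c x)).
  move=> x _; rewrite (bigD1 (f x)) //= indicE mem_set // mul1r big1 ?addr0 //.
  move=> c fx_neq; rewrite indicE memNset ?mul0r //= => fx_eq.
  by rewrite fx_eq eqxx in fx_neq.
by apply: measurable_sum => c; apply: measurable_funM.
Qed.

Lemma measurable_fiber_cmp (J : finType) (C : Type) (F : (J -> R) -> C)
    (g : J -> T -> R) :
  (forall u v, (forall i j, (u i <= u j) = (v i <= v j)) -> F u = F v) ->
  (forall i, measurable_fun setT (g i)) ->
  forall c, measurable ((fun x => F (g^~ x)) @^-1` [set c]).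
Proof.
move=> F_cmp mg c.
pose pattern x : {ffun J * J -> bool} := [ffun ij => g ij.1 x <= g ij.2 x].
have -> : (fun x => F (g^~ x)) @^-1` [set c] =
    \bigcup_(b in [set b | exists2 x, pattern x = b & F (g^~ x) = c])
      (pattern @^-1` [set b]).
  apply/seteqP; split => [x Fx | x [_ [x' <- Fx'] /= eq_pat]].
    by exists (pattern x) => //; exists x.
  rewrite /= -Fx'; apply: F_cmp => i j.
  by have /ffunP/(_ (i, j)) := eq_pat; rewrite !ffunE.
apply: fin_bigcup_measurable; first exact: finite_finset.
move=> b _; have -> : pattern @^-1` [set b] =
    \bigcap_(ij in [set: J * J]) [set x | (g ij.1 x <= g ij.2 x) = b ij].
  apply/seteqP; split => [x /= <- ij _ | x /= eq_pat]; first by rewrite ffunE.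
  by apply/ffunP => ij; rewrite ffunE eq_pat.
apply: fin_bigcap_measurable; first exact: finite_finset.
move=> ij _.
have := measurable_fun_ler (mg ij.1) (mg ij.2) measurableT (I : measurable [set b ij]).
by rewrite setTI.
Qed.

End Measurability.

Lemma eq_phi (R : realType) (K : nat) (u v : 'I_K.+1 -> R) :
  (forall i j, (u i <= u j) = (v i <= v j)) -> phi u = phi v.
Proof.
move=> uv; rewrite /phi.
have -> : [forall y, u (lab y) < u ord_max] = [forall y, v (lab y) < v ord_max].
  by apply: eq_forallb => y; rewrite !ltNge uv.
by case: ifP => // _; apply: eq_pick => y; apply: eq_forallb => y'; rewrite uv.
Qed.

Lemma ae_eq_integral_le (R : realType) (d : measure_display) (T : measurableType d)
    (mu : measure T R) (F G : T -> R) :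
  measurable_fun setT F -> measurable_fun setT G -> (forall x, 0 <= G x <= F x) ->
  (\int[mu]_x (F x)%:E < +oo)%E -> (\int[mu]_x (F x)%:E <= \int[mu]_x (G x)%:E)%E ->
  {ae mu, forall x, F x = G x}.
Proof.
move=> mF mG GF F_fin le_FG.
have G_ge0 x : 0 <= G x by have /andP[] := GF x.
have FG_ge0 x : 0 <= F x - G x by have /andP[_] := GF x; rewrite subr_ge0.
have mFG : measurable_fun setT (fun x => F x - G x) by exact: measurable_funB.
have split_F : (\int[mu]_x (F x)%:E = \int[mu]_x (G x)%:E + \int[mu]_x (F x - G x)%:E)%E.
  rewrite -ge0_integralD //; last 4 first.
  - by move=> x _; rewrite lee_fin.
  - exact/measurable_EFinP.
  - by move=> x _; rewrite lee_fin.
  - exact/measurable_EFinP.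
  by apply: eq_integral => x _; rewrite -EFinD addrC subrK.
have G_fin : (\int[mu]_x (G x)%:E)%E \is a fin_num.
  rewrite ge0_fin_numE ?integral_ge0 // => [|x _]; last by rewrite lee_fin.
  apply: le_lt_trans F_fin; apply: ge0_le_integral => //.
  - by move=> x _; rewrite lee_fin.
  - exact/measurable_EFinP.
  - exact/measurable_EFinP.
  - by move=> x _; rewrite lee_fin; have /andP[] := GF x.
have FG0 : (\int[mu]_x (F x - G x)%:E = 0)%E.
  apply/eqP; rewrite eq_le integral_ge0 ?andbT => [|x _]; last by rewrite lee_fin.
  by move: le_FG; rewrite split_F -{2}(adde0 (\int[mu]_x (G x)%:E)%E) leeD2lE.
have mFG' : measurable_fun setT (fun x => (F x - G x)%:E) by exact/measurable_EFinP.
have /(ae_eq_integral_abs mu measurableT mFG') ae0 :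
    (\int[mu]_x `|(F x - G x)%:E| = 0)%E.
  by rewrite -FG0; apply: eq_integral => x _; rewrite gee0_abs // lee_fin.
by apply: filterS ae0 => x /(_ I) /= /eqP; rewrite eqe subr_eq0 => /eqP.
Qed.

Section MeasurableRisk.
Context (R : realType) (K : nat) (d : measure_display) (T : measurableType d).
Hypothesis K_gt1 : (1 < K)%N.

Lemma measurable_asoftmax (g : 'I_K.+1 -> T -> R) : meas_score g ->
  forall i, measurable_fun setT (fun x => asoftmax (g^~ x) i).
Proof.
move=> mg i.
have m_exp j : measurable_fun setT (fun x => expR (g j x)).
  by apply: measurableT_comp (mg j); exact: measurable_expR.
have m_sum : measurable_fun setT (fun x => expsum (g^~ x)).
  by apply: measurable_sum => y; exact: m_exp.
have m_max : measurable_fun setT (fun x => expmax (g^~ x)).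
  by apply: measurable_bigmax => y; exact: m_exp.
case: (labP i) => [|y].
  under eq_fun do rewrite asoftmax_max.
  apply: measurable_funM; first exact: m_exp.
  apply: measurable_funV_pos => [|x].
    by apply: measurable_funB => //; exact: measurable_funD.
  by have := expmax_lt_expsum (g^~ x) K_gt1; have := expR_gt0 (g ord_max x); lra.
under eq_fun do rewrite asoftmax_lab.
apply: measurable_funM; first exact: m_exp.
by apply: measurable_funV_pos => // x; rewrite expsum_gt0 // ltnW.
Qed.

Lemma measurable_target (p : T -> 'I_K -> 'I_K -> R) i : cond_pmf p ->
  measurable_fun setT (fun x => target (p x) i).
Proof.
case=> _ _ mp; case: (labP i) => [|y].
  by under eq_fun do rewrite target_max; exact: measurable_sum.
by under eq_fun do rewrite target_lab; exact: measurable_sum.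
Qed.

Lemma measurable_cond_risk (p : T -> 'I_K -> 'I_K -> R) (g : 'I_K.+1 -> T -> R) :
  cond_pmf p -> meas_score g ->
  measurable_fun setT (fun x => cond_risk (p x) (g^~ x)).
Proof.
move=> [_ _ mp] mg.
have m_ln (f : T -> R) :
    measurable_fun setT f -> measurable_fun setT (fun x => ln (f x)).
  by move=> mf; apply: measurableT_comp mf; exact: measurable_ln.
have m_if (b : bool) (f : T -> R) : measurable_fun setT f ->
    measurable_fun setT (fun x => if b then f x else 0).
  by case: b => // _; exact: measurable_cst.
have m_asoft := measurable_asoftmax mg.
apply: measurable_sum => y; apply: measurable_sum => m.
apply: measurable_funM; first exact: mp.
apply: measurable_funB; last exact/m_if/m_ln.
apply: measurable_funB; first exact/measurable_funN/m_ln.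
by apply/m_if/m_ln/measurable_funB => //; exact: measurable_cst.
Qed.

Lemma measurable_asoftmax_inv (t : 'I_K.+1 -> T -> R) :
  (forall i, measurable_fun setT (t i)) -> (forall x, t ord_max x < 1) ->
  meas_score (fun i x => asoftmax_inv (t^~ x) i).
Proof.
move=> mt t_lt1 i; rewrite /asoftmax_inv; case: (i == ord_max).
  apply: measurableT_comp; first exact: measurable_ln.
  apply: measurable_funM; last first.
    apply: measurable_funV_pos => [|x]; last by rewrite subr_gt0.
    by apply: measurable_funB => //; exact: measurable_cst.
  apply: measurable_funM => //; apply: measurable_funB; first exact: measurable_cst.
  exact: measurable_bigmax.
by apply: measurableT_comp (mt i); exact: measurable_ln.
Qed.

Lemma meas_dec_phi (g : 'I_K.+1 -> T -> R) : meas_score g ->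
  meas_dec (fun x => phi (g^~ x)).
Proof. exact: measurable_fiber_cmp (@eq_phi R K). Qed.

Lemma measurable_cond_risk01 (p : T -> 'I_K -> 'I_K -> R) (f : T -> option 'I_K) :
  cond_pmf p -> meas_dec f -> measurable_fun setT (fun x => cond_risk01 (p x) (f x)).
Proof.
move=> [_ _ mp] mf.
apply: (measurable_fun_dec (G := fun o x => cond_risk01 (p x) o)) => // o.
by apply: measurable_sum => y; apply: measurable_sum => m; apply: measurable_funM.
Qed.

End MeasurableRisk.

Section RiskMinimizer.
Context (R : realType) (K : nat) (d : measure_display) (T : measurableType d).
Variables (P : probability T R) (p : T -> 'I_K -> 'I_K -> R) (gs : 'I_K.+1 -> T -> R).
Hypotheses (K_gt1 : (1 < K)%N) (hp : cond_pmf p) (hgs : risk_minimizer P p gs).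

Let p_ge0 x : forall y m, 0 <= p x y m. Proof. by case: hp. Qed.
Let p_sum1 x : \sum_(y < K) \sum_(m < K) p x y m = 1. Proof. by case: hp. Qed.

Lemma risk_minimizer_fin :
  (\int[P]_x (cond_risk (p x) (gs^~ x))%:E < +oo)%E.
Proof.
pose L := \sum_(y < K) \sum_(m < K) Lpsi (fun _ : 'I_K.+1 => 0 : R) y m.
apply: (le_lt_trans (hgs.2 (fun _ _ => 0) (fun _ => measurable_cst _))).
apply: (@le_lt_trans _ _ L%:E); last exact: ltry.
rewrite /Rpsi -[leRHS]mule1 -(probability_setT P) -integral_cst //.
apply: ge0_le_integral => //.
- by move=> x _; rewrite lee_fin cond_risk_ge0.
- apply/measurable_EFinP; apply: (measurable_cond_risk K_gt1 (g := fun _ _ => 0) hp).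
  by move=> i; exact: measurable_cst.
- by move=> x _; rewrite lee_fin cond_risk_le_Lpsi.
Qed.

Lemma asoftmax_minimizer_ae :
  {ae P, forall x, asoftmax (gs^~ x) = target (p x)}.
Proof.
(* the midpoint is realised by a score vector even where the target has zero
   entries *)
pose mid x i := (asoftmax (gs^~ x) i + target (p x) i) / 2.
pose gm i x := asoftmax_inv (mid x) i.
have mid_lt1 x : mid x ord_max < 1.
  have /andP[_ u_lt1] := asoftmax_max_itv (gs^~ x) K_gt1.
  by have := target_max_le1 (p_ge0 x) (p_sum1 x); rewrite /mid; lra.
have gmE x : asoftmax (gm^~ x) = mid x.
  apply: asoftmax_invK => // [i|].
    have := asoftmax_gt0 (gs^~ x) i K_gt1; have := target_ge0 (p_ge0 x) i.
    by rewrite /mid; lra.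
  rewrite /mid -mulr_suml big_split /= sum_asoftmax_lab ?sum_target_lab ?(ltnW K_gt1) //.
  by field.
have m_gm : meas_score gm.
  apply: measurable_asoftmax_inv => // i.
  apply: measurable_funM; last exact: measurable_cst.
  apply: measurable_funD; last exact: measurable_target.
  exact: measurable_asoftmax hgs.1 i.
have risk_mid x := cond_risk_midpoint (p_ge0 x) (p_sum1 x) K_gt1
  (fun i => f_equal (fun f => f i) (gmE x)).
have risk_bounds x : 0 <= cond_risk (p x) (gm^~ x) <= cond_risk (p x) (gs^~ x).
  by rewrite cond_risk_ge0 ?(risk_mid x).1.
have := ae_eq_integral_le (measurable_cond_risk K_gt1 hp hgs.1)
  (measurable_cond_risk K_gt1 hp m_gm) risk_bounds risk_minimizer_fin (hgs.2 gm m_gm).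
by apply: filterS => x /esym /(risk_mid x).2.
Qed.

Lemma R01E (f : T -> option 'I_K) :
  R01 P p f = (\int[P]_x (cond_risk01 (p x) (f x))%:E)%E.
Proof. by []. Qed.

Lemma phi_minimizer_optimal (f : T -> option 'I_K) : meas_dec f ->
  (R01 P p (fun x => phi (gs^~ x)) <= R01 P p f)%E.
Proof.
move=> mf; rewrite !R01E; apply: ae_ge0_le_integral => //.
- by move=> x _; rewrite lee_fin cond_risk01_ge0.
- exact/measurable_EFinP/measurable_cond_risk01/meas_dec_phi/hgs.1.
- by move=> x _; rewrite lee_fin cond_risk01_ge0.
- exact/measurable_EFinP/measurable_cond_risk01.
apply: filterS asoftmax_minimizer_ae => x eq_t _.
by rewrite lee_fin; apply: phi_bayes.
Qed.

End RiskMinimizer.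

Lemma prob_estimator_bounded (R : realType) (K : nat)
    (h : ('I_K.+1 -> R) -> 'I_K.+1 -> R) :
  (1 < K)%N -> prob_estimator h -> forall u i, `|h u i| <= 1.
Proof.
move=> K_gt1 h_est u i.
have [q [q_ge0 q_sum1 q_target]] := target_asoftmax u K_gt1.
have min_u : risk_minimizer \d_tt (fun _ : unit => q) (fun i _ => u i).
  split=> [j|g' _]; first exact: measurable_cst.
  rewrite /Rpsi !integral_dirac //= diracT !mul1e lee_fin.
  exact: cond_risk_min q_ge0 q_sum1 _ _ K_gt1 (esym q_target).
have pmf_q : cond_pmf (fun _ : unit => q) by split=> // y m; exact: measurable_cst.
have [N [_ N0 hN]] := h_est _ _ _ _ _ pmf_q min_u.
have h_u : h u = asoftmax u.
  rewrite -q_target; apply: contrapT => neq.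
  have : @dirac _ unit tt R N = 0%E := N0.
  by rewrite diracE (mem_set (hN tt neq)) => /eqP; rewrite eqe oner_eq0.
by rewrite h_u norm_asoftmax_le1.
Qed.

Unset Implicit Arguments.

Theorem theorem2 (R : realType) (K : nat) (hK : (1 < K)%N)
    (d : measure_display) (T : measurableType d) (P : probability T R)
    (p : T -> 'I_K -> 'I_K -> R) (hp : cond_pmf p)
    (gs : 'I_K.+1 -> T -> R) (hgs : risk_minimizer P p gs) :
  [/\ meas_dec (fun x => phi (fun i => gs i x)) /\
      (forall f : T -> option 'I_K, meas_dec f ->
         (R01 P p (fun x => phi (fun i => gs i x)) <= R01 P p f)%E),
      {ae P, forall x, asoftmax (fun i => gs i x) = target (p x)}
    & forall h : ('I_K.+1 -> R) -> ('I_K.+1 -> R), prob_estimator h -> exists B : R, forall u i, `|h u i| <= B].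
Proof.
split.
- split; first exact: meas_dec_phi hgs.1.
  exact: phi_minimizer_optimal hK hp hgs.
- exact: asoftmax_minimizer_ae hK hp hgs.
- by move=> h h_est; exists 1; exact: prob_estimator_bounded hK h_est.
Qed.
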